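(* Let $t\ge 2$. Let $G$ be a stitched 2-ichromatic ordered graph with vertices $v_1<\dots<v_{m+n}$ whose parts are $\{v_1,\ldots,v_m\}$ and $\{v_{m+1},\ldots,v_{m+n}\}$. If $v_1v_{m+n}$ and $v_mv_{m+1}$ are edges of $G$, then $R_t(G)\ge (2t+1)r+1$, where $r=\min(m,n)-1$.
   Context: An ordered graph is a graph together with a specified linear ordering of its vertex set. An ordered graph $G$ is contained in an ordered graph $H$ if there is an order-preserving injection $V(G)\to V(H)$ mapping edges to edges. An interval coloring of an ordered graph is a partition of its vertex set into independent sets each consisting of consecutive vertices (called parts); an ordered graph is 2-ichromatic if its minimum number of parts in an interval coloring is 2. A 2-ichromatic ordered graph is stitched if the four vertices consisting of the first and last vertex of each of the two parts lie in a single connected component. $R_t(G)$ is the minimum $N$ such that every coloring of the edges of the ordered complete graph on $N$ vertices with $t$ colors contains a monochromatic copy of $G$. *)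

From mathcomp Require Import all_boot.
Set Implicit Arguments. Unset Strict Implicit. Unset Printing Implicit Defensive.

Definition is_ograph (N : nat) (E : rel 'I_N) : Prop :=
  symmetric E /\ irreflexive E.

(* An interval coloring with k parts: a surjective nondecreasing map to 'I_k
   (so each part is a nonempty set of consecutive vertices) whose parts are
   independent sets. *)
Definition interval_coloring (N k : nat) (E : rel 'I_N) (col : 'I_N -> 'I_k) : Prop :=
  [/\ (forall x y : 'I_N, x <= y -> col x <= col y),
      (forall j : 'I_k, exists x, col x = j)
    & (forall x y : 'I_N, E x y -> col x != col y)].

Definition interval_colorable (N k : nat) (E : rel 'I_N) : Prop :=
  exists col : 'I_N -> 'I_k, interval_coloring E col.

Definition two_ichromatic (N : nat) (E : rel 'I_N) : Prop :=
  interval_colorable 2 E /\ (forall k, interval_colorable k E -> 2 <= k).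

(* The parts of the (2-part) interval coloring are {v_1..v_m} and {v_(m+1)..v_N}
   (0-indexed: [0,m) and [m,N)). *)
Definition has_parts_split (N : nat) (E : rel 'I_N) (m : nat) : Prop :=
  exists col : 'I_N -> 'I_2,
    interval_coloring E col /\ (forall x : 'I_N, (val (col x) == 0) = (val x < m)).

(* Stitched (w.r.t. the parts [0,m) and [m,N)): the first and last vertices of
   each part, i.e. 0, m-1, m, N-1, lie in one connected component. *)
Definition stitched (N : nat) (E : rel 'I_N) (m : nat) : Prop :=
  forall x y : 'I_N,
    val x \in [:: 0; m.-1; m; N.-1] -> val y \in [:: 0; m.-1; m; N.-1] ->
    connect E x y.

Definition ocontains (N M : nat) (E : rel 'I_N) (H : rel 'I_M) : Prop :=
  exists f : 'I_N -> 'I_M,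
    (forall x y : 'I_N, x < y -> f x < f y) /\
    (forall x y : 'I_N, E x y -> H (f x) (f y)).

(* The graph of edges of colour a in a t-colouring c of the edges of the
   ordered complete graph K_M; edge {x,y} with x<y has colour c x y. *)
Definition color_class (M t : nat) (c : 'I_M -> 'I_M -> 'I_t) (a : 'I_t) : rel 'I_M :=
  fun x y => if x < y then c x y == a else if y < x then c y x == a else false.

Definition ramsey_prop (t N : nat) (E : rel 'I_N) (M : nat) : Prop :=
  forall c : 'I_M -> 'I_M -> 'I_t, exists a : 'I_t, ocontains E (color_class c a).

From mathcomp Require Import all_boot.
From mathcomp Require Import zify.

Set Implicit Arguments.
Unset Strict Implicit.
Unset Printing Implicit Defensive.

(* Cut K_M, M <= (2t+1)r, into 2t+1 consecutive blocks B_0, ..., B_2t of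
   at most r vertices and colour a pair of vertices in blocks i <= j by its
   depth d = min(i, 2t - j) when d < t - 2; the five central blocks
   B_(t-2), ..., B_(t+2) share the two remaining colours, one of them (the
   pivot colour) given to B_(t-2)B_(t+2) and to pairs inside B_(t-1) u B_t u
   B_(t+1) at block distance at most one.
   In a monochromatic copy of G, the parts have at least r + 1 vertices, so
   the nested edges v_1v_(m+n) and v_mv_(m+1) span blocks i1 < i2 <= i3 < i4;
   equal colours then force the pivot colour with i1 = t-2, i4 = t+2.  Pivot
   edges never join B_(t-2) u B_(t+2) to the rest of K_M, so the stitched
   component of v_1 and v_m puts v_m into B_(t-2) u B_(t+2), although
   t-2 < i2 < t+2. *)

Section BlockColor.

(* [s] is t - 2: colours [0, s) are depths, [s] is the pivot colour. *)
Variable s : nat.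

Definition block_color (i j : nat) : nat :=
  let d := minn i (2 * s + 4 - j) in
  if d < s then d
  else if ((i == s) && (j == s + 4)) || [&& s < i, j < s + 4 & j <= i.+1]
  then s else s.+1.

Definition pivot_block (i : nat) : bool := (i == s) || (i == s + 4).

Lemma block_color_lt i j : block_color i j < s.+2.
Proof. by rewrite /block_color; repeat case: ifP; lia. Qed.

Lemma block_color_nested i1 i2 i3 i4 :
  i1 < i2 -> i2 <= i3 -> i3 < i4 -> i4 <= 2 * s + 4 ->
  block_color i1 i4 = block_color i2 i3 ->
  [/\ block_color i1 i4 = s, i1 = s & i4 = s + 4].
Proof. by rewrite /block_color; repeat case: ifP; move=> *; do ?split; lia. Qed.

Lemma block_color_pivot i j : i <= j -> j <= 2 * s + 4 ->
  block_color i j = s -> pivot_block i = pivot_block j.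
Proof. by rewrite /pivot_block /block_color; repeat case: ifP; lia. Qed.

Definition block_coloring (r : nat) {M : nat} (x y : 'I_M) : 'I_s.+2 :=
  inord (block_color (x %/ r) (y %/ r)).

Lemma block_coloringE r M (x y : 'I_M) :
  nat_of_ord (block_coloring r x y) = block_color (x %/ r) (y %/ r).
Proof. by rewrite inordK // block_color_lt. Qed.

End BlockColor.

Lemma ltn_div_addr r x y : 0 < r -> x + r <= y -> x %/ r < y %/ r.
Proof.
move=> r_gt0 le_xr_y.
by rewrite -addn1 -(divnDMl 1 x r_gt0) mul1n leq_div2r.
Qed.

Lemma strict_mono_ord_gap N M (f : 'I_N -> 'I_M) :
  (forall x y : 'I_N, x < y -> f x < f y) ->
  forall k (x y : 'I_N), y = x + k :> nat -> f x + k <= f y.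
Proof.
move=> f_mono; elim=> [|k IHk] x y def_y.
  by rewrite addn0 (_ : x = y) //; apply: val_inj; rewrite /= def_y addn0.
have lt_xk_N : x + k < N by have := ltn_ord y; lia.
have := IHk x (Ordinal lt_xk_N) erefl.
have := f_mono (Ordinal lt_xk_N) y ltac:(rewrite /= def_y; lia).
lia.
Qed.

Lemma color_class_lt M t (c : 'I_M -> 'I_M -> 'I_t) a (x y : 'I_M) :
  x < y -> color_class c a x y = (c x y == a).
Proof. by rewrite /color_class => ->. Qed.

Lemma color_classC M t (c : 'I_M -> 'I_M -> 'I_t) a :
  symmetric (color_class c a).
Proof. by move=> x y; rewrite /color_class; case: ltngtP. Qed.

Lemma closed_color_class M t (c : 'I_M -> 'I_M -> 'I_t) a (P : pred 'I_M) :
  (forall x y : 'I_M, x < y -> c x y = a -> P x = P y) ->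
  closed (color_class c a) P.
Proof.
move=> cP x y; case: (ltngtP x y) => [lt_xy|lt_yx|/val_inj ->] //.
- by rewrite color_class_lt // => /eqP; apply: cP.
- by rewrite color_classC color_class_lt // => /eqP /(cP _ _ lt_yx) /esym.
Qed.

Lemma block_coloring_no_copy s r M m n (E : rel 'I_(m + n)) (a : 'I_s.+2) :
  0 < r -> r < m -> r < n -> M <= (2 * s + 5) * r ->
  (forall x y : 'I_(m + n), val x = 0 -> val y = (m + n).-1 -> E x y) ->
  (forall x y : 'I_(m + n), val x = m.-1 -> val y = m -> E x y) ->
  (forall x y : 'I_(m + n), val x = 0 -> val y = m.-1 -> connect E x y) ->
  ~ ocontains E (color_class (@block_coloring s r M) a).
Proof.
move=> r_gt0 lt_rm lt_rn le_M outer_edge inner_edge stitch [f [f_mono f_edge]].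
pose blk (x : 'I_M) := x %/ r.
have blk_le (x : 'I_M) : blk x <= 2 * s + 4.
  by rewrite /blk -ltnS ltn_divLR //; have := ltn_ord x; lia.
have blk_mono (x y : 'I_M) : x < y -> blk x <= blk y.
  by move=> /ltnW; apply: leq_div2r.
have edge_color (x y : 'I_M) : x < y ->
    color_class (block_coloring s r) a x y -> block_color s (blk x) (blk y) = a.
  by move=> lt_xy; rewrite color_class_lt // -block_coloringE => /eqP ->.
have lt0 : 0 < m + n by lia.
have ltm1 : m.-1 < m + n by lia.
have ltm : m < m + n by lia.
have ltN1 : (m + n).-1 < m + n by lia.
pose v1 := Ordinal lt0; pose vm := Ordinal ltm1.
pose vm1 := Ordinal ltm; pose vN := Ordinal ltN1.
have lt_outer : f v1 < f vN by apply: f_mono => /=; lia.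
have lt_inner : f vm < f vm1 by apply: f_mono => /=; lia.
have blk_left : blk (f v1) < blk (f vm).
  apply: ltn_div_addr => //.
  have := strict_mono_ord_gap f_mono (k := m.-1) (x := v1) (y := vm).
  rewrite /=; lia.
have blk_right : blk (f vm1) < blk (f vN).
  apply: ltn_div_addr => //.
  have := strict_mono_ord_gap f_mono (k := n.-1) (x := vm1) (y := vN).
  rewrite /=; lia.
have col_outer :=
  edge_color _ _ lt_outer (f_edge _ _ (outer_edge v1 vN erefl erefl)).
have col_inner :=
  edge_color _ _ lt_inner (f_edge _ _ (inner_edge vm vm1 erefl erefl)).
have [pivot_a blk_v1 blk_vN] := block_color_nested blk_left
  (blk_mono _ _ lt_inner) blk_right (blk_le _)
  (etrans col_outer (esym col_inner)).
pose P := [pred v : 'I_M | pivot_block s (blk v)].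
have closedP : closed (color_class (@block_coloring s r M) a) P.
  apply: closed_color_class => x y lt_xy /(congr1 (@nat_of_ord _)).
  rewrite block_coloringE -col_outer pivot_a.
  exact: block_color_pivot (blk_mono _ _ lt_xy) (blk_le _).
have closedPf : closed E [pred v | f v \in P].
  by move=> x y /f_edge /closedP.
have := closed_connect closedPf (stitch v1 vm erefl erefl).
rewrite !inE /pivot_block blk_v1 eqxx /=.
have := blk_mono _ _ lt_inner; lia.
Qed.

Theorem corollary5p1 (t m n : nat) (E : rel 'I_(m + n)) :
  2 <= t ->
  is_ograph E ->
  two_ichromatic E ->
  has_parts_split E m ->
  stitched E m ->
  (forall x y : 'I_(m + n), val x = 0 -> val y = (m + n).-1 -> E x y) ->
  (forall x y : 'I_(m + n), val x = m.-1 -> val y = m -> E x y) ->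
  forall M : nat, ramsey_prop t E M ->
    (2 * t + 1) * (minn m n).-1 + 1 <= M.
Proof.
case: t => [|[|s]] // _ _ [[col [_ col_onto _]] _] _ stitch.
move=> outer_edge inner_edge M ramsey; set r := (minn m n).-1.
have [r0|r_gt0] := posnP r.
  have [v _] := col_onto ord0.
  have [a [f _]] := ramsey (fun _ _ => ord0).
  by rewrite r0 muln0 (leq_trans _ (ltn_ord (f v))).
rewrite leqNgt; apply/negP => lt_M.
have [a copy] := ramsey (@block_coloring s r M).
apply: (block_coloring_no_copy r_gt0 _ _ _ outer_edge inner_edge _ copy).
1-3: by rewrite /r in r_gt0 lt_M *; lia.
by move=> x y x0 ym; apply: stitch; rewrite !inE ?x0 ?ym eqxx ?orbT.
Qed.
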